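(* Assume the setting and Assumptions A2–A3 below. Run the improved Ader method below with \[ \mathcal{H}=\Big\{\eta_i=\frac{2^{i-1}D}{G}\sqrt{\frac{7}{2T}}\ :\ i=1,\dots,N\Big\},\quad N=\Big\lceil\tfrac12\log_2(1+4T/7)\Big\rceil+1,\quad \alpha=\sqrt{2/(TG^2D^2)}. \] Then for any comparator sequence $\mathbf{u}_1,\dots,\mathbf{u}_T\in\mathcal{X}$, with $P_T=\sum_{t=2}^T\|\mathbf{u}_t-\mathbf{u}_{t-1}\|_2$ and $k=\lfloor\frac12\log_2(1+\frac{4P_T}{7D})\rfloor+1$, \[ \sum_{t=1}^T f_t(\mathbf{x}_t)-\sum_{t=1}^T f_t(\mathbf{u}_t)\le\frac{3G}{4}\sqrt{2T(7D^2+4DP_T)}+\frac{GD\sqrt{2T}}{2}\big[1+2\ln(k+1)\big]=O\big(\sqrt{T(1+P_T)}\big). \]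
   Context: Setting: $\mathcal{X}\subseteq\mathbb{R}^d$ nonempty closed convex; $f_1,\dots,f_T:\mathcal{X}\to\mathbb{R}$ convex differentiable, $f_t$ revealed after $\mathbf{x}_t$ is played. A2: $\max_{\mathbf{x}\in\mathcal{X}}\|\nabla f_t(\mathbf{x})\|_2\le G$ for all $t$. A3: $\mathbf{0}\in\mathcal{X}$ and $\max_{\mathbf{x},\mathbf{x}'\in\mathcal{X}}\|\mathbf{x}-\mathbf{x}'\|_2\le D$. Improved Ader: given $\alpha>0$ and $\mathcal{H}=\{\eta_1\le\dots\le\eta_N\}$, one expert per $\eta$ starting at arbitrary $\mathbf{x}_1^\eta\in\mathcal{X}$; initial weights $w_1^{\eta_i}=\frac{C}{i(i+1)}$, $C=1+1/N$. At round $t$: output $\mathbf{x}_t=\sum_\eta w_t^\eta\mathbf{x}_t^\eta$; query $\nabla f_t(\mathbf{x}_t)$; define the surrogate loss $\ell_t(\mathbf{x})=\langle\nabla f_t(\mathbf{x}_t),\mathbf{x}-\mathbf{x}_t\rangle$; update $w_{t+1}^\eta=\frac{w_t^\eta e^{-\alpha\ell_t(\mathbf{x}_t^\eta)}}{\sum_\mu w_t^\mu e^{-\alpha\ell_t(\mathbf{x}_t^\mu)}}$; each expert updates $\mathbf{x}_{t+1}^\eta=\Pi_{\mathcal{X}}[\mathbf{x}_t^\eta-\eta\nabla f_t(\mathbf{x}_t)]$ (Euclidean projection). *)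

(* classical reals. Vectors of R^d are represented as
   functions nat -> R vanishing at all coordinates >= d (predicate in_Rd). *)
From Stdlib Require Import Reals ZArith.
Open Scope R_scope.

Definition vec := nat -> R.

Fixpoint rsum (n : nat) (f : nat -> R) : R :=
  match n with O => 0 | S m => rsum m f + f m end.

Definition sum1 (n : nat) (f : nat -> R) : R := rsum n (fun i => f (S i)).

Definition in_Rd (d : nat) (v : vec) : Prop := forall i, (d <= i)%nat -> v i = 0.

Definition vzero : vec := fun _ => 0.
Definition vadd (u v : vec) : vec := fun i => u i + v i.
Definition vsub (u v : vec) : vec := fun i => u i - v i.
Definition vscal (a : R) (v : vec) : vec := fun i => a * v i.

Definition dot (d : nat) (u v : vec) : R := rsum d (fun i => u i * v i).
Definition norm (d : nat) (v : vec) : R := sqrt (dot d v v).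

Definition convex_subset (X : vec -> Prop) : Prop :=
  forall x y l, X x -> X y -> 0 <= l <= 1 -> X (vadd (vscal l x) (vscal (1 - l) y)).

Definition closed_in_Rd (d : nat) (X : vec -> Prop) : Prop :=
  forall y, in_Rd d y ->
    (forall eps, 0 < eps -> exists x, X x /\ norm d (vsub x y) < eps) -> X y.

Definition convex_on (X : vec -> Prop) (f : vec -> R) : Prop :=
  forall x y l, X x -> X y -> 0 <= l <= 1 ->
    f (vadd (vscal l x) (vscal (1 - l) y)) <= l * f x + (1 - l) * f y.

Definition has_gradient (d : nat) (X : vec -> Prop) (f : vec -> R) (g x : vec) : Prop :=
  forall eps, 0 < eps -> exists delta, 0 < delta /\
    forall y, X y -> norm d (vsub y x) < delta ->
      Rabs (f y - f x - dot d g (vsub y x)) <= eps * norm d (vsub y x).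

Definition is_proj (d : nat) (X : vec -> Prop) (y p : vec) : Prop :=
  X p /\ forall z, X z -> norm d (vsub p y) <= norm d (vsub z y).

Definition Rfloor (x : R) : Z := Int_part x.
Definition Rceil (x : R) : Z := (- Int_part (- x))%Z.
Definition log2 (x : R) : R := ln x / ln 2.

Definition Nexp (T : nat) : nat :=
  (Z.to_nat (Rceil (/ 2 * log2 (1 + 4 * INR T / 7))) + 1)%nat.

Definition eta (D G : R) (T i : nat) : R :=
  2 ^ (i - 1) * D / G * sqrt (7 / (2 * INR T)).

Definition alpha (D G : R) (T : nat) : R := sqrt (2 / (INR T * G ^ 2 * D ^ 2)).

Definition path_length (d T : nat) (u : nat -> vec) : R :=
  rsum (T - 1) (fun j => norm d (vsub (u (j + 2)%nat) (u (j + 1)%nat))).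

Definition kk (D P : R) : R := IZR (Rfloor (/ 2 * log2 (1 + 4 * P / (7 * D)))) + 1.

Definition surr (d : nat) (g xt y : vec) : R := dot d g (vsub y xt).

(* Ader runs one projected-gradient expert per step size eta_i and combines them with
   exponential weights on the linearised losses l_t.  By convexity the dynamic regret is at most
   the linearised one, which splits into the meta regret against a fixed expert k plus the
   dynamic regret of that expert.  Since l_t vanishes at the combined point, Hoeffding's lemma
   bounds the meta regret by ln (1 / w_1^k) / alpha + T alpha (G D)^2 / 2, and the prior
   w_1^k >= 1 / (k + 1)^2 makes this GD sqrt(2T)/2 (1 + 2 ln (k + 1)).  The usual telescoping of
   projected gradient steps against a moving comparator bounds the regret of expert k by
   (D^2 + 2 D P_T) / (2 eta_k) + eta_k T G^2 / 2, and k is the index with eta_k within a factor 2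
   of the optimal step size sqrt ((7 D^2 + 4 D P_T) / (2 T G^2)). *)

From Stdlib Require Import Reals ZArith Lra Lia Psatz FunctionalExtensionality.
From Coquelicot Require Coquelicot.
Open Scope R_scope.

Lemma rsum_ext n f g : (forall i, (i < n)%nat -> f i = g i) -> rsum n f = rsum n g.
Proof.
  induction n as [|n IH]; intros H; simpl; [reflexivity|].
  rewrite IH by (intros; apply H; lia); rewrite H by lia; reflexivity.
Qed.

Lemma rsum_plus n f g : rsum n (fun i => f i + g i) = rsum n f + rsum n g.
Proof. induction n; simpl; lra. Qed.

Lemma rsum_minus n f g : rsum n (fun i => f i - g i) = rsum n f - rsum n g.
Proof. induction n; simpl; lra. Qed.

Lemma rsum_opp n f : rsum n (fun i => - f i) = - rsum n f.
Proof. induction n; simpl; lra. Qed.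

Lemma rsum_scal n c f : rsum n (fun i => c * f i) = c * rsum n f.
Proof. induction n as [|n IH]; simpl; [ring | rewrite IH; ring]. Qed.

Lemma rsum_const n c : rsum n (fun _ => c) = INR n * c.
Proof. induction n as [|n IH]; [simpl; ring | rewrite S_INR; simpl; rewrite IH; ring]. Qed.

Lemma rsum_le n f g : (forall i, (i < n)%nat -> f i <= g i) -> rsum n f <= rsum n g.
Proof.
  induction n as [|n IH]; intros H; simpl; [lra|].
  pose proof (H n ltac:(lia)); pose proof (IH ltac:(intros; apply H; lia)); lra.
Qed.

Lemma rsum_nonneg n f : (forall i, (i < n)%nat -> 0 <= f i) -> 0 <= rsum n f.
Proof.
  intros H; replace 0 with (rsum n (fun _ => 0)) by (rewrite rsum_const; ring).
  now apply rsum_le.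
Qed.

Lemma rsum_swap n m F :
  rsum n (fun i => rsum m (fun j => F i j)) = rsum m (fun j => rsum n (fun i => F i j)).
Proof.
  induction n as [|n IH]; simpl.
  - rewrite rsum_const; ring.
  - now rewrite IH, <- rsum_plus.
Qed.

Lemma sum1_S n f : sum1 (S n) f = sum1 n f + f (S n).
Proof. reflexivity. Qed.

Lemma sum1_ext n f g : (forall i, (1 <= i <= n)%nat -> f i = g i) -> sum1 n f = sum1 n g.
Proof. intros H; apply rsum_ext; intros; apply H; lia. Qed.

Lemma sum1_minus n f g : sum1 n (fun i => f i - g i) = sum1 n f - sum1 n g.
Proof. apply rsum_minus. Qed.

Lemma sum1_le n f g : (forall i, (1 <= i <= n)%nat -> f i <= g i) -> sum1 n f <= sum1 n g.
Proof. intros H; apply rsum_le; intros; apply H; lia. Qed.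

Lemma sum1_nonneg n f : (forall i, (1 <= i <= n)%nat -> 0 <= f i) -> 0 <= sum1 n f.
Proof. intros H; apply rsum_nonneg; intros; apply H; lia. Qed.

Lemma sum1_pos n f : (1 <= n)%nat -> (forall i, (1 <= i <= n)%nat -> 0 < f i) -> 0 < sum1 n f.
Proof.
  intros Hn H; destruct n as [|n]; [lia|]; rewrite sum1_S.
  pose proof (sum1_nonneg n f ltac:(intros; left; apply H; lia)).
  pose proof (H (S n) ltac:(lia)); lra.
Qed.

Lemma sum1_ge_term n f k :
  (forall i, (1 <= i <= n)%nat -> 0 <= f i) -> (1 <= k <= n)%nat -> f k <= sum1 n f.
Proof.
  induction n as [|n IH]; intros H Hk; [lia|]; rewrite sum1_S.
  destruct (Nat.eq_dec k (S n)) as [->|Hne].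
  - pose proof (sum1_nonneg n f ltac:(intros; apply H; lia)); lra.
  - pose proof (IH ltac:(intros; apply H; lia) ltac:(lia)); pose proof (H (S n) ltac:(lia)); lra.
Qed.

Ltac dot_ring :=
  unfold dot;
  repeat (rewrite <- rsum_scal || rewrite <- rsum_plus || rewrite <- rsum_minus
          || rewrite <- rsum_opp);
  apply rsum_ext; intros; cbv beta; unfold vsub, vadd, vscal; ring.

Lemma dot_self_nonneg d v : 0 <= dot d v v.
Proof. apply rsum_nonneg; intros; nra. Qed.

Lemma norm_nonneg d v : 0 <= norm d v.
Proof. apply sqrt_pos. Qed.

Lemma norm_sq d v : norm d v * norm d v = dot d v v.
Proof. apply sqrt_sqrt, dot_self_nonneg. Qed.

Lemma norm_vsub_sym d a b : norm d (vsub a b) = norm d (vsub b a).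
Proof. unfold norm; f_equal; dot_ring. Qed.

Lemma dot_self_le_sq d v c : norm d v <= c -> dot d v v <= c ^ 2.
Proof. intros H; rewrite <- norm_sq; pose proof (norm_nonneg d v); nra. Qed.

Lemma discriminant_nonpos a p b :
  (forall t, 0 <= t ^ 2 * a - 2 * t * p + b) -> 0 <= a -> p ^ 2 <= a * b.
Proof.
  intros H Ha; destruct (Req_dec a 0) as [->|Ha0].
  - destruct (Req_dec p 0) as [->|Hp]; [lra|].
    specialize (H ((b + 1) / (2 * p))).
    replace (((b + 1) / (2 * p)) ^ 2 * 0 - 2 * ((b + 1) / (2 * p)) * p + b) with (-1)
      in H by (field; lra); lra.
  - specialize (H (p / a)).
    replace ((p / a) ^ 2 * a - 2 * (p / a) * p + b) with (b - p ^ 2 / a) in H by (field; lra).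
    apply Rmult_le_reg_r with (/ a); [apply Rinv_0_lt_compat; lra|].
    replace (a * b * / a) with b by (field; lra); unfold Rdiv in H; lra.
Qed.

Lemma dot_abs_le d u v : Rabs (dot d u v) <= norm d u * norm d v.
Proof.
  assert (Hdisc : (dot d u v) ^ 2 <= dot d u u * dot d v v).
  { apply discriminant_nonpos; [|apply dot_self_nonneg].
    intros t; replace (t ^ 2 * dot d u u - 2 * t * dot d u v + dot d v v)
      with (dot d (vsub (vscal t u) v) (vsub (vscal t u) v)) by dot_ring.
    apply dot_self_nonneg. }
  unfold norm; rewrite <- sqrt_mult_alt by apply dot_self_nonneg.
  rewrite <- sqrt_Rsqr_abs; apply sqrt_le_1_alt; unfold Rsqr; lra.
Qed.

Lemma nonneg_of_small_quadratic p b :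
  0 <= b -> (forall l, 0 < l <= 1 -> 0 <= 2 * l * p + l ^ 2 * b) -> 0 <= p.
Proof.
  intros Hb H; destruct (Rle_dec 0 p) as [|Hp]; [assumption|].
  set (l := - p / (b - p)).
  assert (Hl : 0 < l <= 1).
  { unfold l; split; [apply Rdiv_lt_0_compat; lra|].
    apply Rmult_le_reg_r with (b - p); [lra|]; field_simplify; lra. }
  specialize (H l Hl).
  replace (2 * l * p + l ^ 2 * b) with (l * p * (b - 2 * p) / (b - p)) in H
    by (unfold l; field; lra).
  assert (0 < l * - p * (b - 2 * p) / (b - p)).
  { apply Rdiv_lt_0_compat; [apply Rmult_lt_0_compat; [apply Rmult_lt_0_compat|]|]; lra. }
  unfold Rdiv in *; nra.
Qed.

(* Minimality of [p] along the segment from [p] to [z] gives [<p - y, z - p> >= 0]. *)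
Lemma is_proj_variational d X y p z :
  convex_subset X -> is_proj d X y p -> X z -> 0 <= dot d (vsub p y) (vsub z p).
Proof.
  intros Hc [Hp Hmin] Hz; apply nonneg_of_small_quadratic with (dot d (vsub z p) (vsub z p));
    [apply dot_self_nonneg|].
  intros l Hl.
  set (q := vadd (vscal l z) (vscal (1 - l) p)).
  pose proof (dot_self_le_sq d _ _ (Hmin q (Hc z p l Hz Hp ltac:(lra)))) as H.
  rewrite <- Rsqr_pow2 in H; unfold Rsqr in H; rewrite norm_sq in H.
  replace (dot d (vsub q y) (vsub q y))
    with (dot d (vsub p y) (vsub p y) + 2 * l * dot d (vsub p y) (vsub z p)
          + l ^ 2 * dot d (vsub z p) (vsub z p)) in H by (unfold q; dot_ring).
  lra.
Qed.

Lemma is_proj_dist_le d X y p z :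
  convex_subset X -> is_proj d X y p -> X z ->
  dot d (vsub p z) (vsub p z) <= dot d (vsub y z) (vsub y z).
Proof.
  intros Hc Hp Hz; pose proof (is_proj_variational d X y p z Hc Hp Hz).
  pose proof (dot_self_nonneg d (vsub p y)).
  replace (dot d (vsub y z) (vsub y z))
    with (dot d (vsub p z) (vsub p z) + 2 * dot d (vsub p y) (vsub z p)
          + dot d (vsub p y) (vsub p y)) by dot_ring.
  lra.
Qed.

(* On [z = l y + (1 - l) x], convexity gives [f z - f x <= l (f y - f x)] while the gradient gives
   [f z - f x >= l <g, y - x> - e l |y - x|] for small [l]; divide by [l] and let [e -> 0]. *)
Lemma convex_gradient_ineq d X f g x y :
  convex_subset X -> convex_on X f -> has_gradient d X f g x -> X x -> X y ->
  f x + dot d g (vsub y x) <= f y.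
Proof.
  intros Hc Hf Hg Hx Hy.
  pose proof (norm_nonneg d (vsub y x)) as Hn; set (n := norm d (vsub y x)) in *.
  apply le_epsilon; intros e He.
  destruct (Hg (e / (n + 1))) as [del [Hdel Hd]]; [apply Rdiv_lt_0_compat; lra|].
  set (l := del / (del + n + 1)).
  assert (Hl : 0 < l < 1).
  { unfold l; split; [apply Rdiv_lt_0_compat; lra|].
    apply Rmult_lt_reg_r with (del + n + 1); [lra|]; field_simplify; lra. }
  set (z := vadd (vscal l y) (vscal (1 - l) x)).
  assert (Hz : norm d (vsub z x) = l * n).
  { unfold norm, n; replace (dot d (vsub z x) (vsub z x))
      with (l ^ 2 * dot d (vsub y x) (vsub y x)) by (unfold z; dot_ring).
    rewrite sqrt_mult_alt, sqrt_pow2 by (lra || nra); reflexivity. }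
  assert (Hzdel : norm d (vsub z x) < del).
  { rewrite Hz; unfold l; apply Rmult_lt_reg_r with (del + n + 1); [lra|].
    field_simplify; nra. }
  specialize (Hd z (Hc y x l Hy Hx ltac:(lra)) Hzdel); rewrite Hz in Hd.
  replace (dot d g (vsub z x)) with (l * dot d g (vsub y x)) in Hd by (unfold z; dot_ring).
  pose proof (Hf y x l Hy Hx ltac:(lra)) as Hconv; fold z in Hconv.
  pose proof (Rle_abs (- (f z - f x - l * dot d g (vsub y x)))) as Habs; rewrite Rabs_Ropp in Habs.
  assert (Hlin : dot d g (vsub y x) - e / (n + 1) * n <= f y - f x).
  { apply Rmult_le_reg_l with l; [lra|]; nra. }
  assert (e / (n + 1) * n <= e).
  { apply Rmult_le_reg_r with (n + 1); [lra|]; field_simplify; nra. }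
  lra.
Qed.

Lemma convex_weighted_mean X n (lam : nat -> R) (p : nat -> vec) :
  convex_subset X -> (1 <= n)%nat ->
  (forall i, (1 <= i <= n)%nat -> 0 < lam i) -> (forall i, (1 <= i <= n)%nat -> X (p i)) ->
  X (fun j => sum1 n (fun i => lam i * p i j) / sum1 n lam).
Proof.
  intros Hc Hn; induction n as [|n IH]; [lia|]; intros Hl Hp.
  destruct (Nat.eq_dec n 0) as [->|Hn0].
  - replace (fun j => sum1 1 (fun i => lam i * p i j) / sum1 1 lam) with (p 1%nat);
      [apply Hp; lia|].
    apply functional_extensionality; intros j; unfold sum1; simpl.
    pose proof (Hl 1%nat ltac:(lia)); field; lra.
  - pose proof (sum1_pos n lam ltac:(lia) ltac:(intros; apply Hl; lia)) as HS.
    pose proof (Hl (S n) ltac:(lia)) as Hl1.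
    set (c := sum1 n lam / (sum1 n lam + lam (S n))).
    assert (Hc01 : 0 <= c <= 1).
    { unfold c; split; [apply Rlt_le, Rdiv_lt_0_compat; lra|].
      apply Rmult_le_reg_r with (sum1 n lam + lam (S n)); [lra|]; field_simplify; lra. }
    replace (fun j => sum1 (S n) (fun i => lam i * p i j) / sum1 (S n) lam)
      with (vadd (vscal c (fun j => sum1 n (fun i => lam i * p i j) / sum1 n lam))
                 (vscal (1 - c) (p (S n)))).
    + apply Hc; [|apply Hp; lia|exact Hc01].
      apply IH; [lia|intros; apply Hl; lia|intros; apply Hp; lia].
    + apply functional_extensionality; intros j; unfold vadd, vscal, c; rewrite !sum1_S.
      field; lra.
Qed.

Lemma convex_simplex_mean X N (p : nat -> R) (y : nat -> vec) (x : vec) :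
  convex_subset X -> (1 <= N)%nat ->
  (forall i, (1 <= i <= N)%nat -> 0 < p i) -> sum1 N p = 1 ->
  (forall i, (1 <= i <= N)%nat -> X (y i)) ->
  (forall j, x j = sum1 N (fun i => p i * y i j)) -> X x.
Proof.
  intros HX HN Hpos Hsum Hy Hx.
  replace x with (fun j => sum1 N (fun i => p i * y i j) / sum1 N p)
    by (apply functional_extensionality; intros j; rewrite Hsum, Hx; field).
  apply convex_weighted_mean; assumption.
Qed.

Lemma sum1_regret_le_linearized d X T (f : nat -> vec -> R) (g x u : nat -> vec) :
  convex_subset X ->
  (forall t, (1 <= t <= T)%nat -> convex_on X (f t)) ->
  (forall t, (1 <= t <= T)%nat -> has_gradient d X (f t) (g t) (x t)) ->
  (forall t, (1 <= t <= T)%nat -> X (x t)) ->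
  (forall t, (1 <= t <= T)%nat -> X (u t)) ->
  sum1 T (fun t => f t (x t)) - sum1 T (fun t => f t (u t))
  <= sum1 T (fun t => dot d (g t) (vsub (x t) (u t))).
Proof.
  intros HX Hf Hg Hx Hu; rewrite <- sum1_minus; apply sum1_le; intros t Ht.
  pose proof (convex_gradient_ineq d X (f t) (g t) (x t) (u t) HX (Hf t Ht) (Hg t Ht)
    (Hx t Ht) (Hu t Ht)).
  assert (dot d (g t) (vsub (u t) (x t)) = - dot d (g t) (vsub (x t) (u t))) by dot_ring.
  lra.
Qed.

Section CoshBound.
Import Coquelicot.Coquelicot.

Lemma le_of_derive_nonneg (h dh : R -> R) y :
  0 <= y -> (forall z, 0 <= z <= y -> is_derive h z (dh z)) ->
  (forall z, 0 <= z <= y -> 0 <= dh z) -> h 0 <= h y.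
Proof.
  intros Hy Hd Hpos.
  destruct (MVT_gen h 0 y dh) as [c [Hc Heq]];
    rewrite ?Rmin_left, ?Rmax_right in * by lra.
  - intros z Hz; apply Hd; lra.
  - intros z Hz; apply continuity_pt_filterlim, (ex_derive_continuous h z).
    exists (dh z); apply Hd; lra.
  - pose proof (Hpos c Hc); nra.
Qed.

(* [y (e^y + e^-y) - (e^y - e^-y)] has derivative [y (e^y - e^-y) >= 0], hence is nonnegative;
   it is the derivative of [-(e^y + e^-y) e^(-y^2/2)] up to the positive factor [e^(-y^2/2)]. *)
Lemma cosh_le_exp_sq s : 0 <= s -> exp s + exp (- s) <= 2 * exp (s ^ 2 / 2).
Proof.
  intros Hs.
  assert (Hm : forall y, 0 <= y -> 0 <= y * (exp y + exp (- y)) - (exp y - exp (- y))).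
  { intros y Hy.
    refine (Rle_trans _ _ _ _ (le_of_derive_nonneg
      (fun y => y * (exp y + exp (- y)) - (exp y - exp (- y)))
      (fun c => c * (exp c - exp (- c))) y Hy _ _)).
    - rewrite Ropp_0; lra.
    - intros z _; auto_derive; [exact I| ring].
    - intros z Hz; apply Rmult_le_pos; [lra|].
      destruct (Rle_lt_or_eq_dec _ _ (proj1 Hz)) as [Hz0|<-].
      + pose proof (exp_increasing (- z) z ltac:(lra)); lra.
      + rewrite Ropp_0; lra. }
  assert (Hq := le_of_derive_nonneg
    (fun y => - ((exp y + exp (- y)) * exp (- (y ^ 2 / 2))))
    (fun c => exp (- (c ^ 2 / 2)) * (c * (exp c + exp (- c)) - (exp c - exp (- c)))) s Hs).
  cbv beta in Hq.
  replace (- ((exp 0 + exp (- 0)) * exp (- (0 ^ 2 / 2)))) with (-2) in Hq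
    by (replace (- (0 ^ 2 / 2)) with 0 by field; rewrite Ropp_0, exp_0; ring).
  rewrite (exp_Ropp (s ^ 2 / 2)) in Hq; pose proof (exp_pos (s ^ 2 / 2)).
  assert (Hinv : / exp (s ^ 2 / 2) * exp (s ^ 2 / 2) = 1) by (field; lra).
  assert (-2 <= - ((exp s + exp (- s)) * / exp (s ^ 2 / 2))).
  { apply Hq.
    - intros z _; auto_derive; [exact I|].
      replace (z * (z * 1) * / 2) with (z ^ 2 / 2) by field; field.
    - intros z Hz; apply Rmult_le_pos; [apply Rlt_le, exp_pos | apply Hm; lra]. }
  nra.
Qed.

End CoshBound.

Lemma exp_convex l a b :
  0 <= l <= 1 -> exp (l * a + (1 - l) * b) <= l * exp a + (1 - l) * exp b.
Proof.
  intros Hl; set (m := l * a + (1 - l) * b).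
  assert (Ha : exp a = exp m * exp (a - m)) by (rewrite <- exp_plus; f_equal; ring).
  assert (Hb : exp b = exp m * exp (b - m)) by (rewrite <- exp_plus; f_equal; ring).
  pose proof (exp_ineq1_le (a - m)); pose proof (exp_ineq1_le (b - m)); pose proof (exp_pos m).
  rewrite Ha, Hb.
  assert (l * (exp m * (1 + (a - m))) <= l * (exp m * exp (a - m))) by
    (apply Rmult_le_compat_l; [lra|apply Rmult_le_compat_l; lra]).
  assert ((1 - l) * (exp m * (1 + (b - m))) <= (1 - l) * (exp m * exp (b - m))) by
    (apply Rmult_le_compat_l; [lra|apply Rmult_le_compat_l; lra]).
  assert (l * (exp m * (1 + (a - m))) + (1 - l) * (exp m * (1 + (b - m))) = exp m)
    by (unfold m; ring).
  lra.
Qed.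

(* Hoeffding's lemma: convexity bounds [exp (-a y)] by its chord through [-c] and [c]. *)
Lemma hoeffding_sum1 N (p y : nat -> R) c a :
  0 < c -> 0 <= a ->
  (forall i, (1 <= i <= N)%nat -> 0 <= p i) -> sum1 N p = 1 ->
  (forall i, (1 <= i <= N)%nat -> - c <= y i <= c) -> sum1 N (fun i => p i * y i) = 0 ->
  sum1 N (fun i => p i * exp (- a * y i)) <= exp (a ^ 2 * c ^ 2 / 2).
Proof.
  intros Hc Ha Hp Hs Hy H0.
  set (E := exp (a * c)); set (E' := exp (- (a * c))).
  apply Rle_trans with
    (sum1 N (fun i => (E + E') / 2 * p i + (E' - E) / (2 * c) * (p i * y i))).
  - apply sum1_le; intros i Hi; specialize (Hp i Hi); specialize (Hy i Hi).
    set (l := (c - y i) / (2 * c)).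
    assert (Hl : 0 <= l <= 1).
    { unfold l; split; [apply Rmult_le_pos; [lra|apply Rlt_le, Rinv_0_lt_compat; lra]|].
      apply Rmult_le_reg_r with (2 * c); [lra|]; field_simplify; lra. }
    pose proof (exp_convex l (a * c) (- (a * c)) Hl) as Hchord.
    replace (l * (a * c) + (1 - l) * - (a * c)) with (- a * y i) in Hchord
      by (unfold l; field; lra).
    replace ((E + E') / 2 * p i + (E' - E) / (2 * c) * (p i * y i))
      with (p i * (l * E + (1 - l) * E')) by (unfold l; field; lra).
    apply Rmult_le_compat_l; assumption.
  - unfold sum1 in *; rewrite rsum_plus, !rsum_scal, Hs, H0.
    pose proof (cosh_le_exp_sq (a * c) ltac:(nra)) as Hcosh.
    replace ((a * c) ^ 2 / 2) with (a ^ 2 * c ^ 2 / 2) in Hcosh by field.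
    fold E E' in Hcosh; lra.
Qed.

Lemma ln_le x y : 0 < x -> x <= y -> ln x <= ln y.
Proof.
  intros Hx Hxy; destruct (Req_dec x y) as [->|Hne]; [lra|].
  left; apply ln_increasing; lra.
Qed.

Section ExponentialWeights.

Variables (N T : nat) (a c : R) (loss w : nat -> nat -> R).

Hypothesis HN : (1 <= N)%nat.
Hypothesis Hw1_pos : forall i, (1 <= i <= N)%nat -> 0 < w 1%nat i.
Hypothesis Hw1_sum : sum1 N (w 1%nat) = 1.
Hypothesis Hw_update : forall t i, (1 <= t <= T)%nat -> (1 <= i <= N)%nat ->
  w (S t) i = w t i * exp (- a * loss t i) / sum1 N (fun m => w t m * exp (- a * loss t m)).

Lemma hedge_weights_simplex t :
  (1 <= t <= S T)%nat -> (forall i, (1 <= i <= N)%nat -> 0 < w t i) /\ sum1 N (w t) = 1.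
Proof.
  induction t as [|t IH]; intros Ht; [lia|].
  destruct (Nat.eq_dec t 0) as [->|Ht0]; [split; assumption|].
  destruct (IH ltac:(lia)) as [Hpos Hsum].
  assert (HZ : 0 < sum1 N (fun m => w t m * exp (- a * loss t m))).
  { apply sum1_pos; [assumption|]; intros i Hi.
    apply Rmult_lt_0_compat; [apply Hpos; assumption|apply exp_pos]. }
  split.
  - intros i Hi; rewrite Hw_update by lia.
    apply Rdiv_lt_0_compat; [apply Rmult_lt_0_compat; [apply Hpos; lia|apply exp_pos]|lra].
  - unfold sum1 at 1; rewrite (rsum_ext N _ (fun i =>
      / sum1 N (fun m => w t m * exp (- a * loss t m)) * (w t (S i) * exp (- a * loss t (S i))))).
    + rewrite rsum_scal; fold (sum1 N (fun m => w t m * exp (- a * loss t m))); field; lra.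
    + intros i Hi; rewrite Hw_update by lia; unfold Rdiv; ring.
Qed.

Hypothesis Ha : 0 < a.
Hypothesis Hc : 0 < c.
Hypothesis Hloss_bound :
  forall t i, (1 <= t <= T)%nat -> (1 <= i <= N)%nat -> - c <= loss t i <= c.
Hypothesis Hloss_mean :
  forall t, (1 <= t <= T)%nat -> sum1 N (fun i => w t i * loss t i) = 0.

Lemma hedge_weight_lower_bound k n : (1 <= k <= N)%nat -> (n <= T)%nat ->
  w 1%nat k * exp (- a * sum1 n (fun t => loss t k) - INR n * (a ^ 2 * c ^ 2 / 2))
  <= w (S n) k.
Proof.
  intros Hk; induction n as [|n IH]; intros Hn.
  - replace (- a * sum1 0 (fun t => loss t k) - INR 0 * (a ^ 2 * c ^ 2 / 2)) with 0
      by (unfold sum1; simpl; ring).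
    rewrite exp_0; lra.
  - destruct (hedge_weights_simplex (S n) ltac:(lia)) as [Hpos Hsum].
    set (Z := sum1 N (fun m => w (S n) m * exp (- a * loss (S n) m))).
    assert (HZ : Z <= exp (a ^ 2 * c ^ 2 / 2)).
    { apply hoeffding_sum1; try lra; try assumption.
      - intros i Hi; left; apply Hpos; assumption.
      - intros i Hi; apply Hloss_bound; lia.
      - apply Hloss_mean; lia. }
    assert (HZpos : 0 < Z).
    { apply sum1_pos; [assumption|]; intros i Hi.
      apply Rmult_lt_0_compat; [apply Hpos; assumption|apply exp_pos]. }
    rewrite (Hw_update (S n) k ltac:(lia) Hk); fold Z.
    set (c2 := a ^ 2 * c ^ 2 / 2) in *.
    set (Ln := sum1 n (fun t => loss t k)) in *.
    rewrite sum1_S, S_INR; fold Ln.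
    replace (- a * (Ln + loss (S n) k) - (INR n + 1) * c2)
      with ((- a * Ln - INR n * c2) + - a * loss (S n) k + - c2) by ring.
    rewrite !exp_plus, exp_Ropp; unfold Rdiv.
    pose proof (exp_pos (- a * Ln - INR n * c2)).
    pose proof (exp_pos (- a * loss (S n) k)); pose proof (Hw1_pos k Hk).
    rewrite <- !Rmult_assoc; apply Rmult_le_compat.
    + apply Rmult_le_pos; [|lra]; apply Rlt_le, Rmult_lt_0_compat; assumption.
    + apply Rlt_le, Rinv_0_lt_compat, exp_pos.
    + apply Rmult_le_compat_r; [lra|apply IH; lia].
    + apply Rinv_le_contravar; assumption.
Qed.

Lemma hedge_regret k : (1 <= k <= N)%nat ->
  - sum1 T (fun t => loss t k) <= ln (/ w 1%nat k) / a + INR T * a * c ^ 2 / 2.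
Proof.
  intros Hk; pose proof (Hw1_pos k Hk) as Hwk.
  destruct (hedge_weights_simplex (S T) ltac:(lia)) as [Hpos Hsum].
  assert (Hle1 : w (S T) k <= 1).
  { rewrite <- Hsum; apply sum1_ge_term; [intros; left; apply Hpos|]; assumption. }
  pose proof (hedge_weight_lower_bound k T Hk (le_n T)) as Hlow.
  set (E := - a * sum1 T (fun t => loss t k) - INR T * (a ^ 2 * c ^ 2 / 2)) in Hlow.
  assert (Hln : ln (w 1%nat k * exp E) <= 0).
  { rewrite <- ln_1; apply ln_le; [apply Rmult_lt_0_compat; [assumption|apply exp_pos]|lra]. }
  rewrite ln_mult, ln_exp in Hln by (apply exp_pos || assumption); unfold E in Hln.
  rewrite ln_Rinv by assumption.
  apply Rmult_le_reg_r with a; [assumption|].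
  replace ((- ln (w 1%nat k) / a + INR T * a * c ^ 2 / 2) * a)
    with (- ln (w 1%nat k) + INR T * (a ^ 2 * c ^ 2 / 2)) by (field; lra).
  lra.
Qed.

End ExponentialWeights.

Lemma dist_sq_shift_le d D y u v :
  norm d (vsub y u) <= D -> norm d (vsub y v) <= D ->
  dot d (vsub y v) (vsub y v) - dot d (vsub y u) (vsub y u) <= 2 * D * norm d (vsub v u).
Proof.
  intros Hu Hv.
  replace (dot d (vsub y v) (vsub y v) - dot d (vsub y u) (vsub y u))
    with (dot d (vsub u v) (vsub y v) + dot d (vsub u v) (vsub y u)) by dot_ring.
  pose proof (dot_abs_le d (vsub u v) (vsub y v)) as H1.
  pose proof (dot_abs_le d (vsub u v) (vsub y u)) as H2.
  rewrite (norm_vsub_sym d u v) in H1, H2.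
  pose proof (norm_nonneg d (vsub v u)).
  pose proof (Rle_abs (dot d (vsub u v) (vsub y v))).
  pose proof (Rle_abs (dot d (vsub u v) (vsub y u))).
  nra.
Qed.

Section OnlineGradientDescent.

Variables (d : nat) (X : vec -> Prop) (T : nat) (G D eta : R) (y g u : nat -> vec).

Hypothesis HX : convex_subset X.
Hypothesis Heta : 0 < eta.
Hypothesis Hg : forall t, (1 <= t <= T)%nat -> norm d (g t) <= G.
Hypothesis Hdiam : forall z z', X z -> X z' -> norm d (vsub z z') <= D.
Hypothesis Hy1 : X (y 1%nat).
Hypothesis Hy_step : forall t, (1 <= t <= T)%nat ->
  is_proj d X (vsub (y t) (vscal eta (g t))) (y (S t)).
Hypothesis Hu : forall t, (1 <= t <= T)%nat -> X (u t).

Lemma ogd_iterates_in t : (1 <= t <= S T)%nat -> X (y t).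
Proof.
  intros Ht; destruct t as [|t]; [lia|].
  destruct (Nat.eq_dec t 0) as [->|Ht0]; [assumption|].
  apply (Hy_step t ltac:(lia)).
Qed.

Lemma ogd_step_bound t : (1 <= t <= T)%nat ->
  dot d (g t) (vsub (y t) (u t))
  <= (dot d (vsub (y t) (u t)) (vsub (y t) (u t))
      - dot d (vsub (y (S t)) (u t)) (vsub (y (S t)) (u t))) / (2 * eta)
     + eta * G ^ 2 / 2.
Proof.
  intros Ht.
  pose proof (is_proj_dist_le d X _ _ (u t) HX (Hy_step t Ht) (Hu t Ht)) as Hproj.
  replace (dot d (vsub (vsub (y t) (vscal eta (g t))) (u t))
                 (vsub (vsub (y t) (vscal eta (g t))) (u t)))
    with (dot d (vsub (y t) (u t)) (vsub (y t) (u t))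
          - 2 * eta * dot d (g t) (vsub (y t) (u t)) + eta ^ 2 * dot d (g t) (g t))
    in Hproj by dot_ring.
  pose proof (dot_self_le_sq d (g t) G (Hg t Ht)).
  apply Rmult_le_reg_r with (2 * eta); [lra|].
  field_simplify; [nra|lra].
Qed.

Lemma ogd_telescoped n : (n < T)%nat ->
  sum1 (S n) (fun t => dot d (g t) (vsub (y t) (u t)))
  <= (dot d (vsub (y 1%nat) (u 1%nat)) (vsub (y 1%nat) (u 1%nat))
      - dot d (vsub (y (S (S n))) (u (S n))) (vsub (y (S (S n))) (u (S n)))
      + 2 * D * rsum n (fun j => norm d (vsub (u (j + 2)%nat) (u (j + 1)%nat)))) / (2 * eta)
     + INR (S n) * (eta * G ^ 2 / 2).
Proof.
  induction n as [|n IH]; intros Hn.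
  - pose proof (ogd_step_bound 1%nat ltac:(lia)).
    unfold sum1; simpl rsum; simpl INR; unfold Rdiv in *; lra.
  - rewrite sum1_S; simpl rsum.
    replace (n + 2)%nat with (S (S n)) by lia; replace (n + 1)%nat with (S n) by lia.
    pose proof (IH ltac:(lia)) as Hprev.
    pose proof (ogd_step_bound (S (S n)) ltac:(lia)) as Hstep.
    pose proof (dist_sq_shift_le d D (y (S (S n))) (u (S n)) (u (S (S n))))
      as Hshift.
    assert (Hyn : X (y (S (S n)))) by (apply ogd_iterates_in; lia).
    specialize (Hshift (Hdiam _ _ Hyn (Hu (S n) ltac:(lia)))
                       (Hdiam _ _ Hyn (Hu (S (S n)) ltac:(lia)))).
    rewrite (S_INR (S n)); unfold Rdiv in *.
    assert (Hinv : 0 < / (2 * eta)) by (apply Rinv_0_lt_compat; lra).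
    match type of Hshift with ?L <= ?R =>
      assert (L * / (2 * eta) <= R * / (2 * eta)) by (apply Rmult_le_compat_r; lra) end.
    lra.
Qed.

Lemma ogd_dynamic_regret : (1 <= T)%nat ->
  sum1 T (fun t => dot d (g t) (vsub (y t) (u t)))
  <= (D ^ 2 + 2 * D * path_length d T u) / (2 * eta) + eta * INR T * G ^ 2 / 2.
Proof.
  intros HT; pose proof (ogd_telescoped (T - 1) ltac:(lia)) as Htel.
  replace (S (T - 1)) with T in Htel by lia; fold (path_length d T u) in Htel.
  pose proof (dot_self_le_sq d _ D (Hdiam _ _ Hy1 (Hu 1%nat ltac:(lia)))).
  pose proof (dot_self_nonneg d (vsub (y (S T)) (u T))).
  assert (Hinv : 0 < / (2 * eta)) by (apply Rinv_0_lt_compat; lra).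
  unfold Rdiv in *; nra.
Qed.

End OnlineGradientDescent.

Lemma prior_weight_pos N i : (1 <= N)%nat -> (1 <= i)%nat ->
  0 < (1 + / INR N) / (INR i * (INR i + 1)).
Proof.
  intros HN Hi; assert (0 < INR N) by (apply (lt_INR 0); lia).
  assert (1 <= INR i) by (apply (le_INR 1); lia).
  apply Rdiv_lt_0_compat; [pose proof (Rinv_0_lt_compat (INR N)); lra|nra].
Qed.

Lemma prior_weight_sum N : (1 <= N)%nat ->
  sum1 N (fun i => (1 + / INR N) / (INR i * (INR i + 1))) = 1.
Proof.
  intros HN.
  assert (Htel : forall n, sum1 n (fun i => / (INR i * (INR i + 1))) = INR n / (INR n + 1)).
  { induction n as [|n IH]; [unfold sum1; simpl; field|].
    rewrite sum1_S, IH, !S_INR; pose proof (pos_INR n); field; lra. }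
  unfold Rdiv at 1; unfold sum1; rewrite rsum_scal.
  fold (sum1 N (fun i => / (INR i * (INR i + 1)))).
  rewrite Htel; assert (0 < INR N) by (apply (lt_INR 0); lia); field; lra.
Qed.

Lemma ln_inv_prior_weight_le N k : (1 <= N)%nat -> (1 <= k)%nat ->
  ln (/ ((1 + / INR N) / (INR k * (INR k + 1)))) <= 2 * ln (INR k + 1).
Proof.
  intros HN Hk; pose proof (prior_weight_pos N k HN Hk) as Hw.
  assert (0 < INR N) by (apply (lt_INR 0); lia).
  assert (1 <= INR k) by (apply (le_INR 1); lia).
  assert (Hge : / (INR k + 1) ^ 2 <= (1 + / INR N) / (INR k * (INR k + 1))).
  { pose proof (Rinv_0_lt_compat (INR N) ltac:(lra)).
    apply Rle_trans with (/ (INR k * (INR k + 1))).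
    - apply Rinv_le_contravar; nra.
    - unfold Rdiv; rewrite <- (Rmult_1_l (/ (INR k * (INR k + 1)))) at 1.
      apply Rmult_le_compat_r; [apply Rlt_le, Rinv_0_lt_compat; nra|lra]. }
  rewrite ln_Rinv by assumption.
  pose proof (ln_le (/ (INR k + 1) ^ 2) _ ltac:(apply Rinv_0_lt_compat, pow_lt; lra) Hge) as Hln.
  rewrite ln_Rinv, ln_pow in Hln by (try apply pow_lt; lra); simpl in Hln; lra.
Qed.

Lemma alpha_pos D G T : (1 <= T)%nat -> 0 < G -> 0 < D -> 0 < alpha D G T.
Proof.
  intros HT HG HD; assert (1 <= INR T) by (apply (le_INR 1); lia).
  apply sqrt_lt_R0, Rdiv_lt_0_compat; [lra|].
  apply Rmult_lt_0_compat; [apply Rmult_lt_0_compat|]; try apply pow_lt; lra.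
Qed.

Lemma alpha_tuned D G T L : (1 <= T)%nat -> 0 < G -> 0 < D ->
  L / alpha D G T + INR T * alpha D G T * (G * D) ^ 2 / 2
  = G * D * sqrt (2 * INR T) / 2 * (1 + L).
Proof.
  intros HT HG HD; assert (1 <= INR T) by (apply (le_INR 1); lia).
  pose proof (alpha_pos D G T HT HG HD) as Ha.
  assert (Hinv : / alpha D G T = G * D * sqrt (2 * INR T) / 2).
  { rewrite <- (sqrt_pow2 (G * D * sqrt (2 * INR T) / 2)) by
      (apply Rmult_le_pos; [apply Rmult_le_pos; [nra|apply sqrt_pos]|lra]).
    unfold alpha; rewrite <- sqrt_inv.
    f_equal; replace ((G * D * sqrt (2 * INR T) / 2) ^ 2)
      with ((G * D) ^ 2 * (sqrt (2 * INR T) * sqrt (2 * INR T)) / 4) by field.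
    rewrite sqrt_sqrt by lra; field; lra. }
  assert (Hmul : INR T * alpha D G T * (G * D) ^ 2 / 2 = G * D * sqrt (2 * INR T) / 2).
  { apply Rmult_eq_reg_r with (/ alpha D G T); [|apply Rinv_neq_0_compat; lra].
    rewrite Hinv at 2; replace (INR T * alpha D G T * (G * D) ^ 2 / 2 * / alpha D G T)
      with (INR T * (G * D) ^ 2 / 2) by (field; lra).
    pose proof (sqrt_sqrt (2 * INR T) ltac:(lra)); nra. }
  rewrite Hmul; unfold Rdiv at 1; rewrite Hinv; ring.
Qed.

Lemma path_length_bounds d T D (u : nat -> vec) (X : vec -> Prop) : 0 <= D ->
  (forall t, (1 <= t <= T)%nat -> X (u t)) ->
  (forall z z', X z -> X z' -> norm d (vsub z z') <= D) ->
  0 <= path_length d T u <= INR T * D.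
Proof.
  intros HD Hu Hdiam; split; [apply rsum_nonneg; intros; apply norm_nonneg|].
  apply Rle_trans with (rsum (T - 1) (fun _ => D)).
  - apply rsum_le; intros; apply Hdiam; apply Hu; lia.
  - rewrite rsum_const; apply Rmult_le_compat_r; [assumption|apply le_INR; lia].
Qed.

Lemma floor_half_log2_bracket r : 1 <= r ->
  exists m : nat, INR m = IZR (Rfloor (/ 2 * log2 r)) /\ (2 ^ m) ^ 2 <= r < 4 * (2 ^ m) ^ 2.
Proof.
  intros Hr.
  assert (Hln2 : 0 < ln 2) by (rewrite <- ln_1; apply ln_increasing; lra).
  set (z := / 2 * log2 r).
  assert (Hz : ln r = 2 * z * ln 2) by (unfold z, log2; field; lra).
  assert (Hz0 : 0 <= z).
  { pose proof (ln_le 1 r ltac:(lra) Hr) as Hlnr; rewrite ln_1 in Hlnr; nra. }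
  destruct (base_Int_part z) as [Hfl1 Hfl2]; fold (Rfloor z) in Hfl1, Hfl2.
  assert (Hf0 : (0 <= Rfloor z)%Z) by (assert (-1 < Rfloor z)%Z by (apply lt_IZR; lra); lia).
  exists (Z.to_nat (Rfloor z)).
  assert (Hm : INR (Z.to_nat (Rfloor z)) = IZR (Rfloor z))
    by (rewrite INR_IZR_INZ, Z2Nat.id; [reflexivity|assumption]).
  split; [exact Hm|]; set (m := Z.to_nat (Rfloor z)) in *.
  assert (Hpow : 0 < (2 ^ m) ^ 2) by (apply pow_lt, pow_lt; lra).
  assert (Hlog : ln ((2 ^ m) ^ 2) = 2 * INR m * ln 2)
    by (rewrite !ln_pow by (try apply pow_lt; lra); simpl; ring).
  assert (Hmz : INR m <= z < INR m + 1) by lra.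
  split.
  - apply Rnot_lt_le; intros Hlt.
    pose proof (ln_increasing r _ ltac:(lra) Hlt); nra.
  - apply ln_lt_inv; [lra|lra|].
    rewrite ln_mult, Hlog by lra; replace 4 with (2 ^ 2) by ring.
    rewrite ln_pow by lra; simpl INR; nra.
Qed.

Lemma kk_index T D P : (1 <= T)%nat -> 0 < D -> 0 <= P <= INR T * D ->
  exists k : nat, (1 <= k <= Nexp T)%nat /\ INR k = kk D P /\
    (2 ^ (k - 1)) ^ 2 <= 1 + 4 * P / (7 * D) < 4 * (2 ^ (k - 1)) ^ 2.
Proof.
  intros HT HD [HP0 HPT].
  assert (Hr : 1 <= 1 + 4 * P / (7 * D) <= 1 + 4 * INR T / 7).
  { replace (4 * P / (7 * D)) with (4 / 7 * (P / D)) by (field; lra).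
    replace (4 * INR T / 7) with (4 / 7 * (INR T * D / D)) by (field; lra).
    assert (0 <= P / D <= INR T * D / D)
      by (unfold Rdiv; split; [|apply Rmult_le_compat_r]; try apply Rmult_le_pos;
          try apply Rlt_le, Rinv_0_lt_compat; lra).
    lra. }
  destruct (floor_half_log2_bracket _ (proj1 Hr)) as [m [Hm Hbr]].
  exists (S m); replace (S m - 1)%nat with m by lia.
  split; [split; [lia|]|split; [rewrite S_INR, Hm; reflexivity|exact Hbr]].
  unfold Nexp.
  set (z := / 2 * log2 (1 + 4 * P / (7 * D))) in Hm.
  set (z' := / 2 * log2 (1 + 4 * INR T / 7)).
  assert (Hzz : z <= z').
  { unfold z, z', log2; apply Rmult_le_compat_l; [lra|]; unfold Rdiv.
    apply Rmult_le_compat_r; [apply Rlt_le, Rinv_0_lt_compat; rewrite <- ln_1;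
      apply ln_increasing; lra|].
    apply ln_le; lra. }
  destruct (base_Int_part z) as [Hfl _]; destruct (base_Int_part (- z')) as [Hcl _].
  assert (Hle : IZR (Rfloor z) <= IZR (Rceil z'))
    by (unfold Rfloor, Rceil; rewrite opp_IZR; lra).
  apply le_IZR in Hle.
  assert (Hmz : Z.of_nat m = Rfloor z) by (apply eq_IZR; rewrite <- INR_IZR_INZ; exact Hm).
  lia.
Qed.

(* With [y := 2 T G eta] and [E := sqrt (2 T (7 D^2 + 4 D P))] one has [y^2 = 14 T D^2 q^2] and
   [E^2 = 14 T D^2 r], so the bracket on [q] gives [y <= E < 2 y]; the first term is then at
   most [G E / 2] and the second equals [G y / 4]. *)
Lemma ogd_bound_tuned T G D P q : 1 <= T -> 0 < G -> 0 < D -> 0 <= P -> 0 < q ->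
  q ^ 2 <= 1 + 4 * P / (7 * D) < 4 * q ^ 2 ->
  let eta := q * D / G * sqrt (7 / (2 * T)) in
  (D ^ 2 + 2 * D * P) / (2 * eta) + eta * T * G ^ 2 / 2
  <= 3 * G / 4 * sqrt (2 * T * (7 * D ^ 2 + 4 * D * P)).
Proof.
  intros HT HG HD HP Hq [Hlo Hhi] eta.
  set (r := 1 + 4 * P / (7 * D)) in *.
  set (E := sqrt (2 * T * (7 * D ^ 2 + 4 * D * P))).
  assert (HE : 0 <= E) by apply sqrt_pos.
  assert (HE2 : E * E = 14 * T * D ^ 2 * r)
    by (unfold E, r; rewrite sqrt_sqrt by (apply Rmult_le_pos; nra); field; lra).
  set (s := sqrt (7 / (2 * T))).
  assert (Hs2 : s * s = 7 / (2 * T))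
    by (apply sqrt_sqrt, Rlt_le, Rdiv_lt_0_compat; lra).
  assert (Hs : 0 < s) by (apply sqrt_lt_R0, Rdiv_lt_0_compat; lra).
  assert (Heta : 0 < eta)
    by (unfold eta; fold s; apply Rmult_lt_0_compat; [apply Rdiv_lt_0_compat; nra|exact Hs]).
  set (y := 2 * T * G * eta).
  assert (Hy2 : y * y = 14 * T * D ^ 2 * q ^ 2).
  { unfold y, eta; fold s.
    replace (2 * T * G * (q * D / G * s) * (2 * T * G * (q * D / G * s)))
      with (4 * T * T * q ^ 2 * D ^ 2 * (s * s)) by (field; lra).
    rewrite Hs2; field; lra. }
  assert (Hy : 0 < y) by (unfold y; apply Rmult_lt_0_compat; [nra|exact Heta]).
  assert (HTD : 0 < 14 * T * D ^ 2) by nra.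
  assert (HyE : y <= E) by nra.
  assert (HEy : E <= 2 * y) by nra.
  assert (Hfirst : (D ^ 2 + 2 * D * P) / (2 * eta) <= G * E / 2).
  { apply Rmult_le_reg_r with (2 * eta); [lra|].
    replace ((D ^ 2 + 2 * D * P) / (2 * eta) * (2 * eta)) with (D ^ 2 + 2 * D * P)
      by (field; lra).
    assert (Hrhs : G * E / 2 * (2 * eta) = E * y / (2 * T)) by (unfold y; field; lra).
    assert (Hlhs : D ^ 2 + 2 * D * P <= E * E / (4 * T)).
    { rewrite HE2; unfold r; apply Rmult_le_reg_r with (4 * T); [lra|].
      field_simplify; [nra|lra]. }
    rewrite Hrhs; apply Rle_trans with (1 := Hlhs).
    apply Rmult_le_reg_r with (4 * T); [lra|]; field_simplify; [nra|lra|lra]. }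
  assert (Hsecond : eta * T * G ^ 2 / 2 = G * y / 4) by (unfold y; field).
  assert (G * y <= G * E) by (apply Rmult_le_compat_l; lra).
  lra.
Qed.

Lemma eta_pos D G T i : (1 <= T)%nat -> 0 < G -> 0 < D -> 0 < eta D G T i.
Proof.
  intros HT HG HD; assert (1 <= INR T) by (apply (le_INR 1); lia).
  unfold eta; apply Rmult_lt_0_compat; [apply Rdiv_lt_0_compat; [|lra]|].
  - apply Rmult_lt_0_compat; [apply pow_lt|]; lra.
  - apply sqrt_lt_R0, Rdiv_lt_0_compat; lra.
Qed.

Lemma surr_weighted_mean_zero d N (p : nat -> R) (y : nat -> vec) g x :
  sum1 N p = 1 -> (forall j, x j = sum1 N (fun i => p i * y i j)) ->
  sum1 N (fun i => p i * surr d g x (y i)) = 0.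
Proof.
  intros Hsum Hx; unfold sum1, surr, dot.
  rewrite (rsum_ext N _ (fun i => rsum d (fun j => p (S i) * (g j * vsub (y (S i)) x j))))
    by (intros; rewrite <- rsum_scal; reflexivity).
  rewrite rsum_swap; replace 0 with (rsum d (fun _ => 0)) by (rewrite rsum_const; ring).
  apply rsum_ext; intros j _.
  rewrite (rsum_ext N _ (fun i => g j * (p (S i) * y (S i) j) - g j * x j * p (S i)))
    by (intros; unfold vsub; ring).
  rewrite rsum_minus, !rsum_scal; fold (sum1 N p) (sum1 N (fun i => p i * y i j)).
  rewrite <- Hx, Hsum; ring.
Qed.

Lemma surr_bound d g x y G D :
  norm d g <= G -> norm d (vsub y x) <= D -> - (G * D) <= surr d g x y <= G * D.
Proof.
  intros Hg Hyx; pose proof (dot_abs_le d g (vsub y x)) as Hcs.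
  assert (norm d g * norm d (vsub y x) <= G * D)
    by (apply Rmult_le_compat; auto using norm_nonneg).
  pose proof (Rle_abs (surr d g x y)); pose proof (Rle_abs (- surr d g x y)).
  rewrite Rabs_Ropp in *; unfold surr in *; lra.
Qed.

Section AderMeta.

Variables (N T : nat) (G D : R) (loss w : nat -> nat -> R).

Hypothesis HN : (1 <= N)%nat.
Hypothesis Hw1 : forall i, (1 <= i <= N)%nat ->
  w 1%nat i = (1 + / INR N) / (INR i * (INR i + 1)).
Hypothesis Hw_update : forall t i, (1 <= t <= T)%nat -> (1 <= i <= N)%nat ->
  w (S t) i = w t i * exp (- alpha D G T * loss t i)
              / sum1 N (fun m => w t m * exp (- alpha D G T * loss t m)).

Lemma ader_weights_simplex t :
  (1 <= t <= S T)%nat -> (forall i, (1 <= i <= N)%nat -> 0 < w t i) /\ sum1 N (w t) = 1.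
Proof.
  apply hedge_weights_simplex with (a := alpha D G T) (loss := loss); try assumption.
  - intros i Hi; rewrite Hw1 by exact Hi; apply prior_weight_pos; lia.
  - rewrite (sum1_ext _ _ _ Hw1); apply prior_weight_sum, HN.
Qed.

Lemma ader_meta_regret k : (1 <= T)%nat -> 0 < G -> 0 < D ->
  (forall t i, (1 <= t <= T)%nat -> (1 <= i <= N)%nat -> - (G * D) <= loss t i <= G * D) ->
  (forall t, (1 <= t <= T)%nat -> sum1 N (fun i => w t i * loss t i) = 0) ->
  (1 <= k <= N)%nat ->
  - sum1 T (fun t => loss t k) <= G * D * sqrt (2 * INR T) / 2 * (1 + 2 * ln (INR k + 1)).
Proof.
  intros HT HG HD Hbound Hmean Hk.
  destruct (ader_weights_simplex 1 ltac:(lia)) as [Hw1_pos Hw1_sum].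
  pose proof (hedge_regret N T (alpha D G T) (G * D) loss w HN Hw1_pos Hw1_sum Hw_update
    (alpha_pos D G T HT HG HD) ltac:(nra) Hbound Hmean k Hk) as Hregret.
  rewrite (alpha_tuned D G T _ HT HG HD), Hw1 in Hregret by exact Hk.
  pose proof (ln_inv_prior_weight_le N k HN ltac:(lia)).
  assert (0 <= G * D * sqrt (2 * INR T) / 2)
    by (apply Rmult_le_pos; [apply Rmult_le_pos; [nra|apply sqrt_pos]|lra]).
  apply Rle_trans with (1 := Hregret); apply Rmult_le_compat_l; lra.
Qed.

End AderMeta.

Lemma ogd_regret_tuned d X T G D k (y g u : nat -> vec) :
  (1 <= T)%nat -> 0 < G -> 0 < D -> convex_subset X ->
  (forall t, (1 <= t <= T)%nat -> norm d (g t) <= G) ->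
  (forall z z', X z -> X z' -> norm d (vsub z z') <= D) ->
  X (y 1%nat) ->
  (forall t, (1 <= t <= T)%nat -> is_proj d X (vsub (y t) (vscal (eta D G T k) (g t))) (y (S t))) ->
  (forall t, (1 <= t <= T)%nat -> X (u t)) ->
  (2 ^ (k - 1)) ^ 2 <= 1 + 4 * path_length d T u / (7 * D) < 4 * (2 ^ (k - 1)) ^ 2 ->
  sum1 T (fun t => dot d (g t) (vsub (y t) (u t)))
  <= 3 * G / 4 * sqrt (2 * INR T * (7 * D ^ 2 + 4 * D * path_length d T u)).
Proof.
  intros HT HG HD HX Hg Hdiam Hy1 Hy_step Hu Hbracket.
  pose proof (ogd_dynamic_regret d X T G D (eta D G T k) y g u HX (eta_pos D G T k HT HG HD)
    Hg Hdiam Hy1 Hy_step Hu HT) as Hregret.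
  pose proof (ogd_bound_tuned (INR T) G D (path_length d T u) (2 ^ (k - 1))
    ltac:(apply (le_INR 1); lia) HG HD (proj1 (path_length_bounds d T D u X ltac:(lra) Hu Hdiam))
    ltac:(apply pow_lt; lra) Hbracket) as Htuned.
  cbv zeta in Htuned; fold (eta D G T k) in Htuned.
  lra.
Qed.

Theorem theorem4
  (d : nat) (X : vec -> Prop) (T : nat) (G D : R)
  (f : nat -> vec -> R) (grad : nat -> vec -> vec)
  (xe : nat -> nat -> vec) (w : nat -> nat -> R) (x : nat -> vec)
  (u : nat -> vec) :
  (1 <= T)%nat -> 0 < G -> 0 < D ->
  (forall z, X z -> in_Rd d z) ->
  (exists z, X z) ->
  closed_in_Rd d X ->
  convex_subset X ->
  (forall t, (1 <= t <= T)%nat -> convex_on X (f t)) ->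
  (forall t z, (1 <= t <= T)%nat -> X z ->
     in_Rd d (grad t z) /\ has_gradient d X (f t) (grad t z) z) ->
  (* A2 *)
  (forall t z, (1 <= t <= T)%nat -> X z -> norm d (grad t z) <= G) ->
  (* A3 *)
  X vzero ->
  (forall z z', X z -> X z' -> norm d (vsub z z') <= D) ->
  (forall i, (1 <= i <= Nexp T)%nat -> X (xe 1%nat i)) ->
  (forall i, (1 <= i <= Nexp T)%nat ->
     w 1%nat i = (1 + / INR (Nexp T)) / (INR i * (INR i + 1))) ->
  (forall t j, (1 <= t <= T)%nat ->
     x t j = sum1 (Nexp T) (fun i => w t i * xe t i j)) ->
  (forall t i, (1 <= t <= T)%nat -> (1 <= i <= Nexp T)%nat ->
     w (S t) i =
       w t i * exp (- alpha D G T * surr d (grad t (x t)) (x t) (xe t i)) /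
       sum1 (Nexp T) (fun m =>
         w t m * exp (- alpha D G T * surr d (grad t (x t)) (x t) (xe t m)))) ->
  (forall t i, (1 <= t <= T)%nat -> (1 <= i <= Nexp T)%nat ->
     is_proj d X (vsub (xe t i) (vscal (eta D G T i) (grad t (x t)))) (xe (S t) i)) ->
  (forall t, (1 <= t <= T)%nat -> X (u t)) ->
  sum1 T (fun t => f t (x t)) - sum1 T (fun t => f t (u t)) <=
    3 * G / 4 * sqrt (2 * INR T * (7 * D ^ 2 + 4 * D * path_length d T u))
    + G * D * sqrt (2 * INR T) / 2
      * (1 + 2 * ln (kk D (path_length d T u) + 1)).
Proof.
  (* Nonemptiness, closedness and [X vzero] only ensure that the projections exist, which the
     hypotheses on [xe] already provide. *)
  intros HT HG HD _ _ _ HX Hconv Hgrad HGb _ Hdiam Hxe1 Hw1 Hx Hw Hproj Hu.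
  set (N := Nexp T) in *; set (P := path_length d T u); set (g := fun t => grad t (x t)).
  set (loss := fun t i => surr d (g t) (x t) (xe t i)).
  assert (HN : (1 <= N)%nat) by (unfold N, Nexp; lia).
  pose proof (ader_weights_simplex N T G D loss w HN Hw1 Hw) as Hsimplex.
  assert (HXe : forall t i, (1 <= t <= S T)%nat -> (1 <= i <= N)%nat -> X (xe t i))
    by (intros t i Ht Hi; apply (ogd_iterates_in d X T (eta D G T i) (fun t => xe t i) g); auto).
  assert (HXx : forall t, (1 <= t <= T)%nat -> X (x t)).
  { intros t Ht; destruct (Hsimplex t ltac:(lia)) as [Hpos Hsum].
    apply (convex_simplex_mean X N (w t) (xe t)); auto; intros; apply HXe; lia. }
  destruct (kk_index T D P HT HD (path_length_bounds d T D u X ltac:(lra) Hu Hdiam))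
    as [k [Hk [<- Hbracket]]].
  pose proof (sum1_regret_le_linearized d X T f g x u HX Hconv
    (fun t Ht => proj2 (Hgrad t _ Ht (HXx t Ht))) HXx Hu) as Hlin.
  assert (Hsplit : sum1 T (fun t => dot d (g t) (vsub (x t) (u t)))
    = - sum1 T (fun t => loss t k) + sum1 T (fun t => dot d (g t) (vsub (xe t k) (u t)))).
  { unfold sum1; rewrite <- rsum_opp, <- rsum_plus; apply rsum_ext; intros.
    unfold loss, surr; dot_ring. }
  pose proof (ader_meta_regret N T G D loss w HN Hw1 Hw k HT HG HD
    (fun t i Ht Hi => surr_bound _ _ _ _ _ _ (HGb t _ Ht (HXx t Ht))
                        (Hdiam _ _ (HXe t i ltac:(lia) Hi) (HXx t Ht)))
    (fun t Ht => surr_weighted_mean_zero _ _ _ _ _ _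
                   (proj2 (Hsimplex t ltac:(lia))) (fun j => Hx t j Ht)) Hk) as Hmeta.
  pose proof (ogd_regret_tuned d X T G D k (fun t => xe t k) g u HT HG HD HX
    (fun t Ht => HGb t _ Ht (HXx t Ht)) Hdiam (Hxe1 k Hk) (fun t Ht => Hproj t k Ht Hk)
    Hu Hbracket) as Hexpert.
  cbv beta in Hexpert; fold P in Hexpert; lra.
Qed.
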